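(* Let $f,g\in\mathcal{S}_d$ and $\beta>0$, and suppose $\hat{\mathbb{D}}_{\beta,d}(f,g)<\infty$. Then $\hat{\mathbb{D}}_{\beta,\infty}(f,g)<\infty$.
   Context: $\mathcal{S}_d$ is the set of multiplicative functions $f=f_1*\cdots*f_d$ where each $f_i$ is completely multiplicative with $|f_i(n)|\le1$, and $(a*b)(n)=\sum_{dm=n}a(d)b(m)$. For $k\in\{1,2,\dots\}\cup\{\infty\}$, $\hat{\mathbb{D}}_{\beta,k}(f,g):=\sum_p\sum_{j=1}^k\frac{|f(p^j)-g(p^j)|}{p^{j\beta}}$ (sum over primes). *)

From HB Require Import structures.
From mathcomp Require Import all_boot all_order all_algebra.
From mathcomp Require Import complex.
From mathcomp Require Import all_classical all_reals all_analysis.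
Set Implicit Arguments. Unset Strict Implicit. Unset Printing Implicit Defensive.
Import Order.TTheory GRing.Theory Num.Theory.
Local Open Scope ring_scope.
Local Open Scope complex_scope.

Section Defs.
Variable R : realType.

Definition cmod (z : R[i]) : R := ComplexField.Normc.normc z.

(* arithmetic functions: values at n >= 1 are the relevant ones *)
Definition arith := nat -> R[i].

Definition dconv (a b : arith) : arith :=
  fun n => \sum_(d <- divisors n) a d * b (n %/ d)%N.

Definition delta : arith := fun n => if n == 1%N then 1 else 0.

Definition dconv_big (d : nat) (fs : 'I_d -> arith) : arith :=
  foldr (fun i acc => dconv (fs i) acc) delta (enum 'I_d).

Definition completely_multiplicative (f : arith) : Prop :=
  f 1%N = 1 /\ forall m n, (0 < m)%N -> (0 < n)%N -> f (m * n)%N = f m * f n.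

Definition in_S (d : nat) (f : arith) : Prop :=
  exists fs : 'I_d -> arith,
    (forall i, completely_multiplicative (fs i)) /\
    (forall i n, (0 < n)%N -> cmod (fs i n) <= 1) /\
    (forall n, (0 < n)%N -> f n = dconv_big fs n).

Definition Dpart (beta : R) (K : nat) (f g : arith) (N : nat) : R :=
  \sum_(p < N | prime p)
    \sum_(1 <= j < K.+1)
      cmod (f (p ^ j)%N - g (p ^ j)%N) / ((p%:R : R) `^ (j%:R * beta)).

(* \hat D_{beta,k}(f,g) < oo  (series of nonnegative terms with bounded partial sums) *)
Definition Dhat_finite (beta : R) (k : nat) (f g : arith) : Prop :=
  exists M : R, forall N, Dpart beta k f g N <= M.

Definition Dhat_inf_finite (beta : R) (f g : arith) : Prop :=
  exists M : R, forall N K, Dpart beta K f g N <= M.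

End Defs.

From HB Require Import structures.
From mathcomp Require Import all_boot all_order all_algebra.
From mathcomp Require Import complex.
From mathcomp Require Import all_classical all_reals all_analysis.
From mathcomp Require Import ring zify.
Set Implicit Arguments.
Unset Strict Implicit.
Unset Printing Implicit Defensive.
Import Order.TTheory GRing.Theory Num.Theory.
Local Open Scope ring_scope.

(* Fix a prime p and put x = p^-beta.  Encode f and g at the powers of p by the series
   A = sum_j f(p^j) X^j and B = sum_j g(p^j) X^j.  As f = f_1 * ... * f_d with completely
   multiplicative f_i, A is the inverse of P = prod_i (1 - f_i(p) X), and likewise B of Q.
   Hence A - B = A B (Q - P) and P - Q = P Q (B - A).  The weighted norm
   |U|_N = sum_(j <= N) |U_j| x^j is submultiplicative, |A|, |B| <= (1 - 2^-beta)^-d and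
   |P|, |Q| <= 2^d; since Q - P has degree at most d, the first d coefficients of A - B bound
   all the others up to a constant independent of p.  Summing over p gives the theorem;
   power series are represented by polynomials, identities holding modulo X^(N+1). *)

Section ComplexModulus.
Variable R : realType.

Lemma cmod_ge0 (z : R[i]) : 0 <= cmod z.
Proof. by case: z => a b; rewrite /cmod sqrtr_ge0. Qed.

Lemma cmodM (z1 z2 : R[i]) : cmod (z1 * z2) = cmod z1 * cmod z2.
Proof. exact: ComplexField.Normc.normcM. Qed.

Lemma cmodN (z : R[i]) : cmod (- z) = cmod z.
Proof. exact: normcN. Qed.

Lemma cmod0 : cmod (0 : R[i]) = 0.
Proof. exact: ComplexField.Normc.normc0. Qed.

Lemma cmod1 : cmod (1 : R[i]) = 1.
Proof. exact: ComplexField.Normc.normc1. Qed.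

Lemma cmodX (z : R[i]) n : cmod (z ^+ n) = cmod z ^+ n.
Proof. by elim: n => [|n IH]; rewrite ?cmod1 // !exprS cmodM IH. Qed.

Lemma cmod_sum (I : Type) (r : seq I) (F : I -> R[i]) :
  cmod (\sum_(i <- r) F i) <= \sum_(i <- r) cmod (F i).
Proof.
elim: r => [|a r IH]; first by rewrite !big_nil cmod0.
by rewrite !big_cons (le_trans (le_normcD _ _)) ?lerD2l.
Qed.

End ComplexModulus.

Section CongruenceModXn.
Variable F : fieldType.
Implicit Types U V : {poly F}.

Lemma dvdp_XnP n U : reflect (forall j, (j < n)%N -> U`_j = 0) ('X^n %| U).
Proof.
apply: (iffP (dvdpP _ _)) => [[q ->] j jn | U_low].
  by rewrite coefMXn jn.
exists (drop_poly n U); rewrite -[LHS](poly_take_drop n) addrC -[RHS]addr0.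
congr (_ + _); apply/polyP => j; rewrite coef_take_poly coef0.
by case: ifP => // /U_low.
Qed.

Lemma dvdp_prod_sub1 (I : Type) (s : seq I) (P : I -> {poly F}) n :
  (forall i, 'X^n %| P i - 1) -> 'X^n %| \prod_(i <- s) P i - 1.
Proof.
move=> P1; elim: s => [|a s IH]; first by rewrite big_nil subrr dvdp0.
have -> : \prod_(i <- a :: s) P i - 1 =
    (P a - 1) * \prod_(i <- s) P i + (\prod_(i <- s) P i - 1).
  by rewrite big_cons; ring.
by rewrite dvdp_add ?dvdp_mulr.
Qed.

End CongruenceModXn.

Lemma sumr_ord_le_widen (R : numFieldType) (F : nat -> R) m n :
  (m <= n)%N -> (forall j, 0 <= F j) -> \sum_(j < m) F j <= \sum_(j < n) F j.
Proof.
move=> mn F_ge0; rewrite -!(big_mkord xpredT).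
exact: (nondecreasing_series (P := xpredT) (fun j _ _ => F_ge0 j)).
Qed.

Lemma sum_coef_le_horner (R : realFieldType) (P : {poly R}) x n :
  0 <= x -> (forall j, 0 <= P`_j) -> \sum_(j < n) P`_j * x ^+ j <= P.[x].
Proof.
move=> x_ge0 P_ge0; rewrite (@horner_coef_wide _ (maxn n (size P))) ?leq_maxr //.
apply: (@sumr_ord_le_widen _ (fun j => P`_j * x ^+ j)) (leq_maxl _ _) _ => j.
by rewrite mulr_ge0 ?exprn_ge0.
Qed.

Section WeightedNorm.
Variables (R : realType) (x : R).
Hypothesis x_ge0 : 0 <= x.
Local Notation C := R[i].
Implicit Types U V : {poly C}.

Definition wnorm N U : R := \sum_(j < N.+1) cmod U`_j * x ^+ j.

Lemma wnorm_ge0 N U : 0 <= wnorm N U.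
Proof. by apply: sumr_ge0 => j _; rewrite mulr_ge0 ?cmod_ge0 ?exprn_ge0. Qed.

Lemma wnormN N U : wnorm N (- U) = wnorm N U.
Proof. by apply: eq_bigr => j _; rewrite coefN cmodN. Qed.

Lemma wnorm_le_trunc M N U : (M <= N)%N -> wnorm M U <= wnorm N U.
Proof.
move=> MN; apply: (@sumr_ord_le_widen _ (fun j => cmod U`_j * x ^+ j)) (MN : M.+1 <= N.+1)%N _ => j.
by rewrite mulr_ge0 ?cmod_ge0 ?exprn_ge0.
Qed.

Lemma wnorm_trunc_size M N U : (size U <= M.+1)%N -> (M <= N)%N ->
  wnorm N U = wnorm M U.
Proof.
move=> sU MN; rewrite /wnorm.
rewrite (big_ord_widen N.+1 (fun j => cmod U`_j * x ^+ j) (MN : M.+1 <= N.+1)%N).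
rewrite [RHS]big_mkcond; apply: eq_bigr => j _ /=; case: ltnP => // Mj.
by rewrite nth_default ?cmod0 ?mul0r // (leq_trans sU).
Qed.

Lemma wnorm_eqmod N U V : 'X^(N.+1) %| U - V -> wnorm N U = wnorm N V.
Proof.
move=> /dvdp_XnP UV; apply: eq_bigr => j _; congr (cmod _ * _).
by apply/eqP; rewrite -subr_eq0 -coefB UV.
Qed.

Lemma wnorm_horner N U : wnorm N U = (\poly_(j < N.+1) cmod U`_j).[x].
Proof. by rewrite horner_poly. Qed.

Lemma wnormM N U V : wnorm N (U * V) <= wnorm N U * wnorm N V.
Proof.
rewrite (wnorm_horner N U) (wnorm_horner N V) -hornerM.
apply: le_trans (@sum_coef_le_horner _ _ x N.+1 x_ge0 _); last first.
  move=> k; rewrite coefM; apply: sumr_ge0 => i _.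
  by rewrite !coef_poly; do 2!case: ifP; rewrite ?mulr0 ?mul0r ?mulr_ge0 ?cmod_ge0.
apply: ler_sum => j _; apply: ler_wpM2r; first exact: exprn_ge0.
rewrite !coefM; apply: le_trans (cmod_sum _ _) _; apply: ler_sum => k _.
have kj : (k <= j)%N by rewrite -ltnS.
have jN : (j <= N)%N by rewrite -ltnS.
by rewrite !coef_poly !ltnS (leq_trans kj jN) (leq_trans (leq_subr k j) jN) cmodM.
Qed.

Lemma wnorm1 N : wnorm N 1 = 1.
Proof.
rewrite (@wnorm_trunc_size 0) ?size_poly1 //.
by rewrite /wnorm big_ord1 coef1 cmod1 mul1r expr0.
Qed.

Lemma wnorm_prod_le N (I : Type) (s : seq I) (F : I -> {poly C}) b :
  (forall i, wnorm N (F i) <= b) -> wnorm N (\prod_(i <- s) F i) <= b ^+ size s.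
Proof.
move=> F_le; elim: s => [|a s IH]; first by rewrite big_nil wnorm1.
rewrite big_cons exprS; apply: le_trans (wnormM _ _ _) _.
by rewrite ler_pM ?wnorm_ge0.
Qed.

Lemma wnorm_subr_le N d (A B P Q : {poly C}) :
  (d <= N)%N -> (size P <= d.+1)%N -> (size Q <= d.+1)%N ->
  'X^(N.+1) %| P * A - 1 -> 'X^(N.+1) %| Q * B - 1 ->
  wnorm N (A - B) <=
    wnorm N A * wnorm N B * (wnorm d P * wnorm d Q) * wnorm d (A - B).
Proof.
move=> dN sP sQ PA QB.
have AB : 'X^(N.+1) %| (A - B) - A * B * (Q - P).
  have -> : (A - B) - A * B * (Q - P) = B * (P * A - 1) - A * (Q * B - 1) by ring.
  by rewrite dvdp_sub ?dvdp_mull.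
have PQ : 'X^(d.+1) %| (P - Q) - P * Q * (B - A).
  apply: dvdp_trans (dvdp_exp2l _ (dN : d.+1 <= N.+1)%N) _.
  have -> : (P - Q) - P * Q * (B - A) = Q * (P * A - 1) - P * (Q * B - 1) by ring.
  by rewrite dvdp_sub ?dvdp_mull.
have sQP : (size (Q - P)%R <= d.+1)%N.
  by rewrite (leq_trans (size_polyD _ _)) // size_polyN geq_max sQ sP.
rewrite (wnorm_eqmod AB); apply: le_trans (wnormM _ _ _) _.
rewrite -[leRHS]mulrA; apply: ler_pM; rewrite ?wnorm_ge0 ?wnormM //.
rewrite (wnorm_trunc_size sQP dN) -wnormN opprB (wnorm_eqmod PQ) -(wnormN _ (A - B)) opprB.
by apply: le_trans (wnormM _ _ _) _; rewrite ler_wpM2r ?wnorm_ge0 ?wnormM.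
Qed.

End WeightedNorm.

Section LocalFactors.
Variable R : realType.
Local Notation C := R[i].

Definition geom_trunc N (c : C) : {poly C} := \poly_(k < N.+1) c ^+ k.

Lemma linfac_geom_trunc N c : 'X^(N.+1) %| (1 - c *: 'X) * geom_trunc N c - 1.
Proof.
apply/dvdp_XnP => j jN; rewrite mulrBl mul1r -scalerAl !coefB coefZ coefXM coef1.
rewrite !coef_poly jN; case: j jN => [|j] jN /=; first by rewrite mulr0 !subr0 subrr.
by rewrite (ltnW jN) exprS subrr sub0r oppr0.
Qed.

Lemma coef0_prod_geom_trunc N (I : Type) (s : seq I) (c : I -> C) :
  (\prod_(i <- s) geom_trunc N (c i))`_0 = 1.
Proof. by rewrite coef0_prod big1 // => i _; rewrite coef_poly expr0. Qed.

Lemma size_linfac (c : C) : (size (1 - c *: 'X)%R <= 2)%N.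
Proof.
rewrite (leq_trans (size_polyD _ _)) // size_polyN geq_max size_poly1.
by rewrite (leq_trans (size_scale_leq _ _)) ?size_polyX.
Qed.

Lemma size_prod_linfac (I : Type) (s : seq I) (c : I -> C) :
  (size (\prod_(i <- s) (1 - c i *: 'X))%R <= (size s).+1)%N.
Proof.
elim: s => [|a s IH]; first by rewrite big_nil size_poly1.
rewrite big_cons (leq_trans (size_polyMleq _ _)) //.
by have := size_linfac (c a); move: IH => /=; lia.
Qed.

Lemma wnorm_geom_trunc_le (x : R) N c : 0 < x < 1 -> cmod c <= 1 ->
  wnorm x N (geom_trunc N c) <= (1 - x)^-1.
Proof.
move=> /andP[x_gt0 x_lt1] c_le1.
apply: (@le_trans _ _ (\sum_(k < N.+1) x ^+ k)).
  apply: ler_sum => k _; rewrite coef_poly ltn_ord cmodX.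
  by rewrite ler_piMl ?exprn_ge0 ?exprn_ile1 ?cmod_ge0 // ltW.
have x_norm : `|x| < 1 by rewrite ger0_norm // ltW.
have := geometric_le_lim N.+1 ler01 x_gt0 x_norm.
by rewrite seriesEord mul1r /=; under eq_bigr do rewrite mul1r.
Qed.

Lemma wnorm_linfac_le (x : R) N c : 0 <= x <= 1 -> cmod c <= 1 ->
  wnorm x N (1 - c *: 'X) <= 2.
Proof.
move=> /andP[x_ge0 x_le1] c_le1.
apply: le_trans (wnorm_le_trunc x_ge0 _ (leqnSn N)) _.
rewrite (@wnorm_trunc_size _ _ 1) ?size_linfac //.
rewrite /wnorm !big_ord_recl big_ord0 addr0 /= !coefB !coef1 !coefZ !coefX /=.
rewrite mulr0 subr0 cmod1 mul1r sub0r cmodN mulr1 expr1 -[2]/(1 + 1) lerD2l.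
by rewrite -[1]mulr1 ler_pM ?cmod_ge0.
Qed.

End LocalFactors.

Lemma divisors_expn p j : prime p ->
  perm_eq (divisors (p ^ j)) [seq (p ^ k)%N | k <- iota 0 j.+1].
Proof.
move=> p_prime; apply: uniq_perm; first exact: divisors_uniq.
  by rewrite map_inj_uniq ?iota_uniq //; exact: expnI (prime_gt1 p_prime).
move=> n; rewrite -dvdn_divisors ?expn_gt0 ?prime_gt0 //.
apply/(dvdn_pfactor _ _ p_prime)/mapP => -[k k_le ->]; exists k => //.
  by rewrite mem_iota add0n ltnS.
by move: k_le; rewrite mem_iota add0n ltnS.
Qed.

Section PrimePowers.
Variable R : realType.

Lemma cmult_expn (h : arith R) p k : completely_multiplicative h -> (0 < p)%N ->
  h (p ^ k)%N = h p ^+ k.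
Proof.
move=> [h1 hM] p_gt0; elim: k => [|k IH]; first by rewrite expn0 h1 expr0.
by rewrite expnS hM ?expn_gt0 ?p_gt0 // IH exprS.
Qed.

Lemma dconv_expn (a b : arith R) p j : prime p ->
  dconv a b (p ^ j)%N = \sum_(k < j.+1) a (p ^ k)%N * b (p ^ (j - k))%N.
Proof.
move=> p_prime; rewrite /dconv (perm_big _ (divisors_expn j p_prime)) big_map.
have -> : iota 0 j.+1 = index_iota 0 j.+1 by rewrite /index_iota subn0.
rewrite big_mkord.
apply: eq_bigr => k _; congr (_ * b _).
by rewrite -expnB ?prime_gt0 // -ltnS.
Qed.

Lemma foldr_dconv_expn (I : Type) (fs : I -> arith R) (s : seq I) p N j :
  prime p -> (forall i, completely_multiplicative (fs i)) -> (j <= N)%N ->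
  foldr (fun i acc => dconv (fs i) acc) (@delta R) s (p ^ j)%N =
  (\prod_(i <- s) geom_trunc N (fs i p))`_j.
Proof.
move=> p_prime fs_cm; elim: s j => [|a s IH] j jN /=.
  rewrite big_nil coef1 /delta -[X in _ == X](expn0 p) eqn_exp2l ?prime_gt1 //.
  by case: j jN.
rewrite big_cons dconv_expn // coefM; apply: eq_bigr => k _.
have kj : (k <= j)%N by rewrite -ltnS.
rewrite IH ?(leq_trans (leq_subr _ _) jN) // cmult_expn ?prime_gt0 //.
by rewrite coef_poly ltnS (leq_trans kj jN).
Qed.

End PrimePowers.

Section PowerWeights.
Variable R : realType.

Lemma inv_powR_natM (a b : R) j : 0 <= a -> (a `^ (j%:R * b))^-1 = (a `^ b)^-1 ^+ j.
Proof. by move=> a_ge0; rewrite mulrC powRrM powR_mulrn ?powR_ge0 // exprVn. Qed.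

Lemma inv_powR_lt1 (a b : R) : 1 < a -> 0 < b -> (a `^ b)^-1 < 1.
Proof.
move=> a_gt1 b_gt0; have a_gt0 : 0 < a by apply: lt_trans a_gt1.
rewrite invf_lt1 ?powR_gt0 //.
by have := gt0_ltr_powR b_gt0 (ler01 : 0 <= 1) (ltW a_gt0) a_gt1; rewrite powR1.
Qed.

Lemma inv_powR_le (a a' b : R) : 0 < a -> a <= a' -> 0 <= b ->
  (a' `^ b)^-1 <= (a `^ b)^-1.
Proof.
move=> a_gt0 aa' b_ge0; have a'_gt0 := lt_le_trans a_gt0 aa'.
rewrite lef_pV2 ?posrE ?powR_gt0 //.
by rewrite (ge0_ler_powR b_ge0) // nnegrE ltW.
Qed.

End PowerWeights.

Definition Dprime (R : realType) (beta : R) (K : nat) (f g : arith R) (p : nat) : R :=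
  \sum_(1 <= j < K.+1) cmod (f (p ^ j)%N - g (p ^ j)%N) / ((p%:R : R) `^ (j%:R * beta)).

Lemma eq_Dprime (R : realType) (beta : R) K (f f' g g' : arith R) p :
  (forall n, (0 < n)%N -> f n = f' n) -> (forall n, (0 < n)%N -> g n = g' n) ->
  (0 < p)%N -> Dprime beta K f g p = Dprime beta K f' g' p.
Proof.
move=> ff' gg' p_gt0; apply: eq_bigr => j _.
by rewrite ff' ?gg' ?expn_gt0 ?p_gt0.
Qed.

Definition Dprime_const (R : realType) (beta : R) (d : nat) : R :=
  let c := (1 - (2 `^ beta)^-1)^-1 in c ^+ d * c ^+ d * (2 ^+ d * 2 ^+ d).

Section LocalComparison.
Variables (R : realType) (d : nat) (beta : R) (p : nat).
Hypotheses (beta_gt0 : 0 < beta) (p_prime : prime p).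

Local Notation x := (((p%:R : R) `^ beta)^-1).
Local Notation c := ((1 - ((2 : R) `^ beta)^-1)^-1).
Local Notation geom_prod h N := (\prod_(i <- enum 'I_d) geom_trunc N (h i p)).
Local Notation linfac_prod h := (\prod_(i <- enum 'I_d) (1 - h i p *: 'X)).

Let inv_powR2_lt1 : ((2 : R) `^ beta)^-1 < 1.
Proof. by rewrite inv_powR_lt1 ?ltr1n. Qed.

Let weight_gt0 : 0 < x.
Proof. by rewrite invr_gt0 powR_gt0 // ltr0n prime_gt0. Qed.

Let weight_le : x <= ((2 : R) `^ beta)^-1.
Proof. by apply: inv_powR_le; rewrite ?ler_nat ?prime_gt1 ?ltW. Qed.

Let weight_ge0 : 0 <= x. Proof. exact: ltW. Qed.

Lemma Dprime_const_ge0 : 0 <= Dprime_const beta d.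
Proof.
have := inv_powR2_lt1; rewrite -subr_gt0 -invr_gt0 => /ltW c_ge0.
by rewrite !mulr_ge0 ?exprn_ge0.
Qed.

Lemma wnorm_geom_prod_le (h : 'I_d -> arith R) N :
  (forall i, cmod (h i p) <= 1) -> wnorm x N (geom_prod h N) <= c ^+ d.
Proof.
move=> h_le1; have x_lt1 : x < 1 := le_lt_trans weight_le inv_powR2_lt1.
rewrite -[in leRHS](size_enum_ord d); apply: wnorm_prod_le => // i.
apply: le_trans (wnorm_geom_trunc_le _ _ _) _; rewrite ?weight_gt0 //.
by rewrite lef_pV2 ?posrE ?subr_gt0 ?lerD2l ?lerN2.
Qed.

Lemma wnorm_linfac_prod_le (h : 'I_d -> arith R) :
  (forall i, cmod (h i p) <= 1) -> wnorm x d (linfac_prod h) <= 2 ^+ d.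
Proof.
move=> h_le1; have x01 : 0 <= x <= 1.
  by rewrite weight_ge0 (le_trans weight_le) ?ltW.
by rewrite -[in leRHS](size_enum_ord d); apply: wnorm_prod_le => // i; exact: wnorm_linfac_le.
Qed.

Lemma size_linfac_prod (h : 'I_d -> arith R) : (size (linfac_prod h) <= d.+1)%N.
Proof. by rewrite -[in d.+1](size_enum_ord d) size_prod_linfac. Qed.

Lemma linfac_geom_prod (h : 'I_d -> arith R) N :
  'X^(N.+1) %| linfac_prod h * geom_prod h N - 1.
Proof. by rewrite -big_split; apply: dvdp_prod_sub1 => i; exact: linfac_geom_trunc. Qed.

Lemma Dprime_wnorm (fs gs : 'I_d -> arith R) N M :
  (forall i, completely_multiplicative (fs i)) ->
  (forall i, completely_multiplicative (gs i)) -> (M <= N)%N ->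
  Dprime beta M (dconv_big fs) (dconv_big gs) p =
  wnorm x M (geom_prod fs N - geom_prod gs N).
Proof.
move=> fs_cm gs_cm MN; set U := (_ - _).
rewrite /wnorm -(big_mkord xpredT (fun j => cmod U`_j * x ^+ j)) big_ltn //.
rewrite /U coefB !coef0_prod_geom_trunc subrr cmod0 mul0r add0r.
apply: eq_big_nat => j /andP[_ jM]; have jN : (j <= N)%N by rewrite -ltnS (leq_trans jM).
by rewrite coefB -!foldr_dconv_expn // inv_powR_natM ?ler0n.
Qed.

Lemma Dprime_le (fs gs : 'I_d -> arith R) K :
  (forall i, completely_multiplicative (fs i)) ->
  (forall i, completely_multiplicative (gs i)) ->
  (forall i, cmod (fs i p) <= 1) -> (forall i, cmod (gs i p) <= 1) ->
  Dprime beta K (dconv_big fs) (dconv_big gs) p <=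
  Dprime_const beta d * Dprime beta d (dconv_big fs) (dconv_big gs) p.
Proof.
move=> fs_cm gs_cm fs_le1 gs_le1; pose N := (K + d)%N.
rewrite !(Dprime_wnorm (N := N)) ?leq_addl ?leq_addr //.
apply: le_trans (wnorm_le_trunc weight_ge0 _ (leq_addr d K)) _.
apply: le_trans (wnorm_subr_le weight_ge0 (leq_addl K d) (size_linfac_prod fs)
  (size_linfac_prod gs) (linfac_geom_prod fs N) (linfac_geom_prod gs N)) _.
rewrite ler_wpM2r ?wnorm_ge0 //; apply: ler_pM; rewrite ?mulr_ge0 ?wnorm_ge0 //.
  by apply: ler_pM; rewrite ?wnorm_ge0 // wnorm_geom_prod_le.
by apply: ler_pM; rewrite ?wnorm_ge0 // wnorm_linfac_prod_le.
Qed.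

End LocalComparison.

Theorem lemma8 (R : realType) (d : nat) (f g : arith R) (beta : R) :
  (0 < d)%N -> in_S d f -> in_S d g -> 0 < beta ->
  Dhat_finite beta d f g -> Dhat_inf_finite beta f g.
Proof.
move=> _ [fs [fs_cm [fs_le1 f_eq]]] [gs [gs_cm [gs_le1 g_eq]]] beta_gt0 [M DM].
have C_ge0 := Dprime_const_ge0 d beta_gt0.
exists (Dprime_const beta d * M) => N K.
apply: le_trans (ler_wpM2l C_ge0 (DM N)).
rewrite /Dpart big_distrr /=; apply: ler_sum => p p_prime.
have p_gt0 := prime_gt0 p_prime.
change (Dprime beta K f g p <= Dprime_const beta d * Dprime beta d f g p).
rewrite !(eq_Dprime _ _ f_eq g_eq p_gt0).
by apply: Dprime_le => // i; [exact: fs_le1 | exact: gs_le1].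
Qed.
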